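(* Suppose the noise condition $\mathbb P_X(0<\Delta(X)\le\delta)\le(\gamma\delta/B)^\alpha$ for all $\delta>0$ holds for some $\alpha,\gamma\ge0$, and $\mathbb P(|\mathcal Z^*(X)|>1)=0$. Then for every policy $\pi:\mathbb R^p\to\mathcal Z^\angle$, $$d(\pi^*,\pi)\le 2\,d_\Delta(\pi^*,\pi),\qquad d_\Delta(\pi^*,\pi)\le c_1\, d(\pi^*,\pi)^{\frac{\alpha}{\alpha+1}},$$ where $c_1=(\alpha\gamma^\alpha)^{-\frac{\alpha}{\alpha+1}}(\alpha+1)\gamma^\alpha$.
   Context: Setting: $X\in\mathbb R^p$, $Y\in\mathbb R^d$ with $\|Y\|\le1$, $f^*(x)=\mathbb E[Y\mid X=x]$. $\mathcal Z=\{z:Az\le b\}$ is a polytope with $\sup_{z\in\mathcal Z}\|z\|\le B$ and finite set of extreme points $\mathcal Z^\angle$; $\mathcal Z^*(x)=\arg\min_{z\in\mathcal Z}f^*(x)^\top z$, $\pi^*(x)\in\mathcal Z^*(x)$; $\Delta(x)=\inf_{z\in\mathcal Z^\angle\setminus\mathcal Z^*(x)}f^*(x)^\top z-\inf_{z\in\mathcal Z}f^*(x)^\top z$ if $\mathcal Z^*(x)\ne\mathcal Z$, else $0$. For policies $\pi,\pi':\mathbb R^p\to\mathcal Z^\angle$, $d(\pi,\pi')=\frac1B\mathbb E_X[f^*(X)^\top(\pi'(X)-\pi(X))]$ and $d_\Delta(\pi,\pi')=\mathbb P_X(\pi(X)\ne\pi'(X))$. *)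

From HB Require Import structures.
From mathcomp Require Import all_boot all_order all_algebra.
From mathcomp Require Import all_classical all_reals all_analysis.
Set Implicit Arguments. Unset Strict Implicit. Unset Printing Implicit Defensive.
Import Order.TTheory GRing.Theory Num.Theory.
Local Open Scope classical_set_scope.
Local Open Scope ring_scope.

Section defs.
Variable R : realType.

Definition dotv n (u v : 'cV[R]_n) : R := \sum_(i < n) u i 0 * v i 0.
Definition enorm n (v : 'cV[R]_n) : R := Num.sqrt (dotv v v).

Definition polytope m d (A : 'M[R]_(m, d)) (b : 'cV[R]_m) : set 'cV[R]_d :=
  [set z | forall i : 'I_m, (A *m z) i 0 <= b i 0].

Definition extreme_points d (S : set 'cV[R]_d) : set 'cV[R]_d :=
  [set z | S z /\ forall (x y : 'cV[R]_d) (t : R), S x -> S y -> 0 < t < 1 ->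
            z = t *: x + (1 - t) *: y -> x = y].

(* Z^*(c) = argmin_{z in Z} c^T z  (c plays the role of f^*(x)) *)
Definition argminZ d (Z : set 'cV[R]_d) (c : 'cV[R]_d) : set 'cV[R]_d :=
  [set z | Z z /\ forall z', Z z' -> dotv c z <= dotv c z'].

Definition gap d (Z : set 'cV[R]_d) (c : 'cV[R]_d) : R :=
  if `[< argminZ Z c = Z >] then 0
  else inf [set dotv c z | z in extreme_points Z `\` argminZ Z c]
       - inf [set dotv c z | z in Z].

End defs.

From HB Require Import structures.
From mathcomp Require Import all_boot all_order all_algebra.
From mathcomp Require Import all_classical all_reals all_analysis.
From mathcomp Require Import ring lra measurable_realfun.
Set Implicit Arguments. Unset Strict Implicit. Unset Printing Implicit Defensive.
Import Order.TTheory GRing.Theory Num.Theory.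
Local Open Scope classical_set_scope.
Local Open Scope ring_scope.

(* The excess cost [f*(X)^T (pi(X) - pi*(X))] is nonnegative, at most [2 B],
   and vanishes where the two policies agree; taking expectations gives the
   first bound.  When the optimal vertex is almost surely unique, a
   disagreement means that [pi(X)] is a suboptimal vertex, whose excess cost is
   at least the gap [Delta(X)].  So for every [delta > 0] the disagreement
   probability is at most [P(0 < Delta <= delta) + P(excess >= delta)], which
   the noise condition and Markov's inequality bound by
   [(gamma delta / B)^alpha + B d(pi*, pi) / delta]; optimizing in [delta]
   gives the second bound.  The polyhedral facts behind this (every point of a
   bounded polytope lies above an extreme point in any linear order, and two
   distinct minimizers give two distinct minimizing vertices) come from moving
   along segments through non-extreme points, which strictly decreases the
   number of slack constraints. *)

Section dotv.
Variables (R : realType) (n : nat).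
Implicit Types (u v w : 'cV[R]_n) (s : R).

Lemma dotvC u v : dotv u v = dotv v u.
Proof. by apply: eq_bigr => i _; rewrite mulrC. Qed.

Lemma dotvDr u v w : dotv u (v + w) = dotv u v + dotv u w.
Proof. by rewrite /dotv -big_split; apply: eq_bigr => i _; rewrite mxE mulrDr. Qed.

Lemma dotvZr u s v : dotv u (s *: v) = s * dotv u v.
Proof. by rewrite /dotv mulr_sumr; apply: eq_bigr => i _; rewrite mxE mulrCA. Qed.

Lemma dotvNr u v : dotv u (- v) = - dotv u v.
Proof. by rewrite -scaleN1r dotvZr mulN1r. Qed.

Lemma dotvBr u v w : dotv u (v - w) = dotv u v - dotv u w.
Proof. by rewrite dotvDr dotvNr. Qed.

Lemma dotvDl u v w : dotv (u + v) w = dotv u w + dotv v w.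
Proof. by rewrite dotvC dotvDr !(dotvC w). Qed.

Lemma dotvZl s u v : dotv (s *: u) v = s * dotv u v.
Proof. by rewrite dotvC dotvZr dotvC. Qed.

Lemma dotvNl u v : dotv (- u) v = - dotv u v.
Proof. by rewrite dotvC dotvNr dotvC. Qed.

Lemma dotvvD u v : dotv (u + v) (u + v) = dotv u u + 2 * dotv u v + dotv v v.
Proof. by rewrite !dotvDl !dotvDr (dotvC v u); ring. Qed.

Lemma dotvvB u v : dotv (u - v) (u - v) = dotv u u - 2 * dotv u v + dotv v v.
Proof. by rewrite dotvvD dotvNr dotvNl dotvNr opprK; ring. Qed.

Lemma dotvv_ge0 u : 0 <= dotv u u.
Proof. by apply: sumr_ge0 => i _; rewrite -expr2 sqr_ge0. Qed.

Lemma dotvv_gt0 u : u != 0 -> 0 < dotv u u.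
Proof.
move=> u0; have [i ui] : exists i, u i 0 != 0.
  apply/existsP; apply: contraNT u0; rewrite negb_exists => /forallP u_eq0.
  by apply/eqP/matrixP => i j; rewrite ord1 mxE; apply/eqP/negbNE/u_eq0.
rewrite /dotv (bigD1 i) //= ltr_pwDl ?sumr_ge0 // => [|k _]; last by rewrite -expr2 sqr_ge0.
by rewrite -expr2 lt0r sqr_ge0 andbT sqrf_eq0.
Qed.

Lemma dotvv_le_sqr u B : enorm u <= B -> dotv u u <= B ^+ 2.
Proof.
rewrite -[dotv u u]sqr_sqrtr ?dotvv_ge0 // => uB.
by rewrite lerXn2r ?nnegrE ?(le_trans _ uB) ?sqrtr_ge0.
Qed.

Lemma enormN u : enorm (- u) = enorm u.
Proof. by rewrite /enorm dotvNl dotvNr opprK. Qed.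

Lemma dotv_le_enorm u v B : 0 < B -> enorm u <= 1 -> enorm v <= B -> dotv u v <= B.
Proof.
move=> B0 u1 vB; have uu := dotvv_le_sqr u1; have vv := dotvv_le_sqr vB.
have := dotvv_ge0 (B *: u - v); rewrite dotvvB !dotvZl dotvZr expr1n in uu * => sq.
have : B * dotv u u <= B * 1 by rewrite ler_wpM2l // ltW.
nra.
Qed.

Lemma dotvvB_le u v : dotv (u - v) (u - v) <= 2 * dotv u u + 2 * dotv v v.
Proof. have := dotvv_ge0 (u + v); rewrite dotvvB dotvvD; lra. Qed.

Lemma trmx_mulmx_dotv u v : (u^T *m v) 0 0 = dotv u v.
Proof. by rewrite mxE; apply: eq_bigr => i _; rewrite mxE. Qed.

End dotv.

Section bounded_polytope.
Variables (R : realType) (d m : nat) (A : 'M[R]_(m, d)) (b : 'cV[R]_m) (B : R).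
Hypothesis Z_bounded : forall z, polytope A b z -> enorm z <= B.
Local Notation Z := (polytope A b).
Implicit Types (c u z : 'cV[R]_d) (s : R).

Definition slack z := #|[pred i : 'I_m | (A *m z) i 0 < b i 0]|.

Lemma mulmxDZ z s u i : (A *m (z + s *: u)) i 0 = (A *m z) i 0 + s * (A *m u) i 0.
Proof. by rewrite mulmxDr -scalemxAr !mxE. Qed.

(* Otherwise [u] would be a recession direction of the bounded polytope. *)
Lemma polytope_row_gt0 z u : Z z -> u != 0 -> exists i, 0 < (A *m u) i 0.
Proof.
move=> Zz u0; apply/not_existsP => u_le0.
have Zs s : 0 <= s -> Z (z + s *: u).
  move=> s0 i; rewrite mulmxDZ; have := Zz i.
  have : (A *m u) i 0 <= 0 by rewrite leNgt; apply/negP/u_le0.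
  nra.
have sq_le s : 0 <= s -> s * (s * dotv u u) <= 4 * B ^+ 2.
  move=> s0; have := dotvvB_le (z + s *: u) z.
  rewrite addrAC subrr add0r dotvZl dotvZr.
  have := dotvv_le_sqr (Z_bounded (Zs s s0)); have := dotvv_le_sqr (Z_bounded Zz).
  lra.
have q0 := dotvv_gt0 u0; set q := dotv u u in q0 sq_le.
pose s := (4 * B ^+ 2 + 1) / q + 1.
have s1 : 1 <= s by rewrite lerDr divr_ge0 ?ltW //; have := sqr_ge0 B; lra.
have sq : s * q = 4 * B ^+ 2 + 1 + q by rewrite mulrDl divfK ?gt_eqF // mul1r.
have := sq_le s (le_trans ler01 s1); nra.
Qed.

Lemma exists_slack_lt z u : Z z -> u != 0 ->
    (forall i, (A *m z) i 0 = b i 0 -> (A *m u) i 0 = 0) ->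
  exists2 s, 0 < s & Z (z + s *: u) /\ (slack (z + s *: u) < slack z)%N.
Proof.
move=> Zz u0 tight; have [i0 Pi0] := polytope_row_gt0 Zz u0.
(* the minimum-ratio test of the simplex method *)
pose F i := (b i 0 - (A *m z) i 0) / (A *m u) i 0.
case: (@arg_minP _ _ _ i0 (fun i => 0 < (A *m u) i 0) F Pi0) => j Pj minj.
have slj : (A *m z) j 0 < b j 0.
  by rewrite lt_neqAle Zz andbT; apply: contraTneq Pj => /tight ->; rewrite ltxx.
have Fj0 : 0 < F j by rewrite divr_gt0 // subr_gt0.
exists (F j) => //; split.
  move=> i; rewrite mulmxDZ; case: (ltP 0 ((A *m u) i 0)) => ui; last first.
    by have := Zz i; nra.
  by rewrite -lerBrDl -ler_pdivlMr // minj.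
rewrite /slack; apply: proper_card; apply/properP; split.
  apply/fintype.subsetP => i; rewrite !inE mulmxDZ => lt_i.
  rewrite lt_neqAle Zz andbT; apply: contraTneq lt_i => tight_i.
  by rewrite (tight i tight_i) mulr0 addr0 tight_i ltxx.
by exists j; rewrite !inE ?slj // mulmxDZ /F divfK ?gt_eqF // addrC subrK ltxx.
Qed.

Lemma exists_extreme_point_le c z : Z z ->
  exists2 v, extreme_points Z v & dotv c v <= dotv c z.
Proof.
move: {2}(slack z).+1 (ltnSn (slack z)) => n.
elim: n z => [//|n IH] z sz Zz.
have [Vz|nVz] := pselect (extreme_points Z z); first by exists z.
have : ~ (forall x y t, Z x -> Z y -> 0 < t < 1 -> z = t *: x + (1 - t) *: y -> x = y).
  by move=> ext; apply: nVz.
move=> /existsNP [x /existsNP [y /existsNP [t]]].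
move=> /not_implyP [Zx /not_implyP [Zy /not_implyP [/andP [t0 t1] /not_implyP [zE xy]]]].
have zE' : z = y + t *: (x - y).
  by rewrite zE scalerBr scalerBl scale1r addrCA addrA.
have tight i : (A *m z) i 0 = b i 0 -> (A *m (x - y)) i 0 = 0.
  have ax : (A *m x) i 0 = (A *m y) i 0 + (A *m (x - y)) i 0.
    by rewrite mulmxBr !mxE; ring.
  have := Zx i; have := Zy i; rewrite ax zE' mulmxDZ; nra.
have descend w : w != 0 -> (forall i, (A *m z) i 0 = b i 0 -> (A *m w) i 0 = 0) ->
    dotv c w <= 0 -> exists2 v, extreme_points Z v & dotv c v <= dotv c z.
  move=> w0 tight_w cw; have [s s0 [Zs lt_s]] := exists_slack_lt Zz w0 tight_w.
  have [v Vv cv] := IH _ (leq_trans lt_s sz) Zs; exists v => //.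
  apply: le_trans cv _; rewrite dotvDr dotvZr gerDl.
  exact: mulr_ge0_le0 (ltW s0) cw.
have u0 : x - y != 0 by rewrite subr_eq0; apply/eqP.
have [cu|cu] := lerP (dotv c (x - y)) 0; first exact: descend _ u0 tight cu.
apply: (descend (- (x - y))); first by rewrite oppr_eq0.
  move=> i /tight; rewrite mulmxN; move: (A *m (x - y)) => M.
  by rewrite mxE => ->; rewrite oppr0.
by rewrite dotvNr oppr_le0 ltW.
Qed.

Lemma exists_extreme_point_ge c z : Z z ->
  exists2 v, extreme_points Z v & dotv c z <= dotv c v.
Proof.
move=> /(exists_extreme_point_le (- c)) [v Vv le_v].
by exists v => //; rewrite -lerN2 -!dotvNl.
Qed.

End bounded_polytope.

Section argmin.
Variables (R : realType) (d : nat) (S : set 'cV[R]_d) (c : 'cV[R]_d).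
Implicit Types (v z : 'cV[R]_d).

Lemma argmin_lt z v : argminZ S c z -> S v -> ~ argminZ S c v -> dotv c z < dotv c v.
Proof.
move=> [Sz z_min] Sv v_nmin; rewrite ltNge; apply/negP => vz.
by apply: v_nmin; split => // z' Sz'; apply: le_trans vz (z_min _ Sz').
Qed.

Lemma extreme_points_argmin v : extreme_points (argminZ S c) v -> extreme_points S v.
Proof.
move=> [[Sv v_min] v_ext]; split => // x y t Sx Sy /andP[t0 t1] vE.
have cvE : t * (dotv c x - dotv c v) + (1 - t) * (dotv c y - dotv c v) = 0.
  by rewrite vE dotvDr !dotvZr; ring.
have cx : 0 <= t * (dotv c x - dotv c v) by rewrite mulr_ge0 ?subr_ge0 ?v_min ?ltW.
have cy : 0 <= (1 - t) * (dotv c y - dotv c v) by rewrite mulr_ge0 ?subr_ge0 ?v_min ?ltW.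
apply: (v_ext x y t); rewrite ?t0 ?t1 //.
  by split=> // z Sz; have := v_min _ Sz; nra.
by split=> // z Sz; have := v_min _ Sz; nra.
Qed.

End argmin.

Lemma polytope_col_mx (R : realType) (d m1 m2 : nat) (A1 : 'M[R]_(m1, d))
    (A2 : 'M[R]_(m2, d)) (b1 : 'cV[R]_m1) (b2 : 'cV[R]_m2) :
  polytope (col_mx A1 A2) (col_mx b1 b2) = polytope A1 b1 `&` polytope A2 b2.
Proof.
apply/seteqP; split => z; rewrite /polytope /= mul_col_mx.
  by move=> le_z; split => i; [have := le_z (lshift m2 i) | have := le_z (rshift m1 i)];
    rewrite ?col_mxEu ?col_mxEd.
by move=> [le1 le2] i; rewrite -(splitK i); case: (fintype.split i) => j /=;
  rewrite ?col_mxEu ?col_mxEd.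
Qed.

Section polytope_face.
Variables (R : realType) (d m : nat) (A : 'M[R]_(m, d)) (b : 'cV[R]_m) (B : R).
Hypothesis Z_bounded : forall z, polytope A b z -> enorm z <= B.
Local Notation Z := (polytope A b).
Local Notation V := (extreme_points (polytope A b)).
Implicit Types (c v z : 'cV[R]_d).

Lemma argmin_polytope c z0 : argminZ Z c z0 ->
  argminZ Z c = polytope (col_mx A c^T) (col_mx b (dotv c z0)%:M).
Proof.
move=> [Zz0 z0_min]; rewrite polytope_col_mx; apply/seteqP; split => z [Zz z_le].
  by split=> // i; rewrite ord1 trmx_mulmx_dotv mxE eqxx mulr1n z_le.
split=> // z' Zz'; apply: le_trans (z0_min _ Zz').
by have := z_le 0; rewrite trmx_mulmx_dotv mxE eqxx mulr1n.
Qed.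

(* The argmin face is itself a bounded polytope, so it has extreme points
   at both ends of the direction z1 - z2; they are extreme in Z too. *)
Lemma argmin_extreme_points_neq c z1 z2 :
  argminZ Z c z1 -> argminZ Z c z2 -> z1 <> z2 ->
  exists v1 v2, [/\ V v1, V v2, argminZ Z c v1, argminZ Z c v2 & v1 <> v2].
Proof.
move=> z1_min z2_min z12; have F_E := argmin_polytope z1_min.
set F := polytope (col_mx A c^T) _ in F_E.
have F_bounded z : F z -> enorm z <= B by rewrite -F_E => -[/Z_bounded].
have Fz1 : F z1 by rewrite -F_E.
have Fz2 : F z2 by rewrite -F_E.
pose u := z1 - z2.
have [v1 Fv1 le1] := exists_extreme_point_le F_bounded u Fz2.
have [v2 Fv2 le2] := exists_extreme_point_ge F_bounded u Fz1.
rewrite -/F -F_E in Fv1 Fv2.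
exists v1, v2; split; [exact: extreme_points_argmin Fv1 | exact: extreme_points_argmin Fv2
  | by case: Fv1 => [[]] | by case: Fv2 => [[]] | move=> v12].
have : 0 < dotv u u by apply: dotvv_gt0; rewrite subr_eq0; apply/eqP.
by rewrite {2}/u dotvBr; move: le1 le2; rewrite v12; lra.
Qed.

Lemma argmin_full c : (forall v, V v -> argminZ Z c v) -> argminZ Z c = Z.
Proof.
move=> all_min; apply/seteqP; split => [z [] //|z Zz]; split => // z' Zz'.
have [v Vv le_v] := exists_extreme_point_ge Z_bounded c Zz.
by apply: le_trans le_v _; case: (all_min _ Vv) => _; apply.
Qed.

Lemma argmin_extremeE c v : V v ->
  argminZ Z c v <-> forall v', V v' -> dotv c v <= dotv c v'.
Proof.
move=> Vv; split=> [[_ v_min] v' [Zv' _]|v_min]; first exact: v_min.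
split=> [|z Zz]; first by case: Vv.
have [v' Vv' le_v'] := exists_extreme_point_le Z_bounded c Zz.
exact: le_trans (v_min _ Vv') le_v'.
Qed.

End polytope_face.

Section finite_min.
Variable R : realType.

Lemma finite_set_argmin (T : eqType) (S : set T) (f : T -> R) :
  finite_set S -> S !=set0 -> exists2 x, S x & forall y, S y -> f x <= f y.
Proof.
move=> /finite_seqP[s ->]; elim: s => [[] //|a s IH] _.
have [s0|/set0P/IH[x sx x_min]] := eqVneq [set` s] set0.
  exists a => [|y]; first exact: mem_head.
  by rewrite /= inE => /predU1P[->//|ys]; have := s0; rewrite -subset0 => /(_ y ys).
have [ax|xa] := lerP (f a) (f x).
  exists a => [|y]; first exact: mem_head.
  by rewrite /= inE => /predU1P[->//|/x_min]; apply: le_trans.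
exists x => [|y]; first by rewrite /= inE sx orbT.
by rewrite /= inE => /predU1P[->|/x_min//]; apply: ltW.
Qed.

Lemma inf_image_attained (T : Type) (S : set T) (f : T -> R) x :
  S x -> (forall y, S y -> f x <= f y) -> inf [set f y | y in S] = f x.
Proof.
move=> Sx x_min; apply/eqP; rewrite eq_le; apply/andP; split.
  by apply: ge_inf; [exists (f x) => _ [y Sy <-]; apply: x_min | exists x].
by apply: lb_le_inf; [exists (f x), x | move=> _ [y Sy <-]; apply: x_min].
Qed.

End finite_min.

Section gap.
Variables (R : realType) (d m : nat) (A : 'M[R]_(m, d)) (b : 'cV[R]_m) (B : R).
Hypothesis Z_bounded : forall z, polytope A b z -> enorm z <= B.
Hypothesis V_finite : finite_set (extreme_points (polytope A b)).
Local Notation Z := (polytope A b).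
Local Notation V := (extreme_points (polytope A b)).
Implicit Types (c v z : 'cV[R]_d).

Lemma exists_argmin_extreme c z : Z z -> exists2 v, V v & argminZ Z c v.
Proof.
move=> Zz; have [v0 Vv0 _] := exists_extreme_point_le Z_bounded c Zz.
have [v Vv v_min] := finite_set_argmin (dotv c) V_finite (ex_intro _ v0 Vv0).
by exists v => //; apply/(argmin_extremeE Z_bounded).
Qed.

Lemma gap_attained c v z0 : V v -> ~ argminZ Z c v -> argminZ Z c z0 ->
  exists2 v1, (V `\` argminZ Z c) v1 &
    (forall v', (V `\` argminZ Z c) v' -> dotv c v1 <= dotv c v') /\
    gap Z c = dotv c v1 - dotv c z0.
Proof.
move=> Vv v_nmin [Zz0 z0_min].
have [v1 Nv1 v1_min] := finite_set_argmin (dotv c) (finite_setD _ V_finite)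
  (ex_intro _ v (conj Vv v_nmin)).
exists v1 => //; split => //.
rewrite /gap asboolF; last by move=> full; apply: v_nmin; rewrite full; case: Vv.
by rewrite (inf_image_attained Nv1 v1_min) (inf_image_attained Zz0 z0_min).
Qed.

Lemma gap_gt0_le c v z0 : V v -> ~ argminZ Z c v -> argminZ Z c z0 ->
  0 < gap Z c <= dotv c v - dotv c z0.
Proof.
move=> Vv v_nmin z0_min; have [v1 [Vv1 v1_nmin] [v1_min ->]] := gap_attained Vv v_nmin z0_min.
by rewrite subr_gt0 (argmin_lt z0_min Vv1.1 v1_nmin) lerD2r v1_min.
Qed.

Lemma gap_gt0_vertices c : 0 < gap Z c -> exists v0 v1,
  [/\ V v0, argminZ Z c v0, V v1, ~ argminZ Z c v1 & gap Z c = dotv c v1 - dotv c v0].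
Proof.
move=> gap_gt0; have [v Vv v_nmin] : exists2 v, V v & ~ argminZ Z c v.
  apply: contrapT => no_v; move: gap_gt0; rewrite /gap asboolT ?ltxx //.
  apply: (argmin_full Z_bounded) => v' Vv'; apply: contrapT => v'_nmin.
  by apply: no_v; exists v'.
have [v0 Vv0 v0_min] := exists_argmin_extreme c Vv.1.
have [v1 [Vv1 v1_nmin] [_ gap_E]] := gap_attained Vv v_nmin v0_min.
by exists v0, v1.
Qed.

End gap.

Section tradeoff.
Variable R : realType.
Implicit Types (p k x a al ga : R).

Lemma le_of_le_addr_div p k x : 0 <= x -> (forall t, 0 < t -> p <= k + x / t) -> p <= k.
Proof.
move=> x0 le_p; apply/ler_addgt0Pr => e e0.
have t0 : 0 < x / e + 1 by have := divr_ge0 x0 (ltW e0); lra.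
apply: le_trans (le_p _ t0) _; rewrite lerD2l ler_pdivrMr //.
by rewrite mulrDr mulr1 mulrCA divff ?gt_eqF // mulr1 lerDl ltW.
Qed.

Lemma le0_of_le_powR p ga al : 0 < ga -> 0 < al ->
  (forall t, 0 < t -> p <= powR (ga * t) al) -> p <= 0.
Proof.
move=> ga0 al0 le_p; apply/ler_addgt0Pr => e e0; rewrite add0r.
have t0 : 0 < powR e al^-1 / ga by rewrite divr_gt0 ?powR_gt0.
have := le_p _ t0; rewrite mulrC divfK ?gt_eqF // -powRrM mulVf ?gt_eqF //.
by rewrite powRr1 // ltW.
Qed.

(* The minimiser of [t |-> a t^al + x / t] solves [al a t^(al+1) = x]. *)
Lemma exists_powR_tradeoff a x al : 0 < a -> 0 < x -> 0 < al ->
  exists2 t, 0 < t & a * powR t al + x / t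
    = powR (al * a) (- (al / (al + 1))) * (al + 1) * a * powR x (al / (al + 1)).
Proof.
move=> a0 x0 al0; have al1 : al + 1 != 0 by rewrite gt_eqF ?ltr_wpDr.
pose q := x / (al * a); have q0 : 0 < q by rewrite divr_gt0 ?mulr_gt0.
pose t := powR q (al + 1)^-1; have t0 : 0 < t by rewrite powR_gt0.
exists t => //.
have t_pow : powR t (al + 1) = q.
  by rewrite /t -powRrM mulVf // powRr1 // ltW.
have x_div : x / t = al * a * powR t al.
  have {1}-> : x = al * a * powR t (al + 1).
    by rewrite t_pow /q mulrC divfK // mulf_neq0 ?gt_eqF.
  rewrite powRD; last by rewrite (negbTE al1).
  by rewrite powRr1 ?ltW // mulrA mulfK ?gt_eqF.
rewrite x_div.
have -> : powR t al = powR (al * a) (- (al / (al + 1))) * powR x (al / (al + 1)).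
  rewrite /t -powRrM (mulrC (al + 1)^-1) /q powRM ?invr_ge0 ?ltW ?mulr_gt0 // [LHS]mulrC.
  by rewrite -[(al * a)^-1]powR_inv1 ?ltW ?mulr_gt0 // -powRrM mulN1r.
by ring.
Qed.

Lemma le_powR_tradeoff p x al ga : 0 <= x -> 0 <= al -> 0 <= ga ->
    (forall t, 0 < t -> p <= powR (ga * t) al + x / t) ->
  p <= powR (al * powR ga al) (- (al / (al + 1))) * (al + 1) * powR ga al
       * powR x (al / (al + 1)).
Proof.
move=> x0 al0 ga0 le_p.
have [al_eq0|al_neq0] := eqVneq al 0.
  rewrite al_eq0 !(mul0r, oppr0, powRr0, mulr1, add0r).
  by apply: le_of_le_addr_div x0 _ => t /le_p; rewrite al_eq0 powRr0.
have al_gt0 : 0 < al by rewrite lt_neqAle eq_sym al_neq0.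
have [ga_eq0|ga_neq0] := eqVneq ga 0.
  rewrite ga_eq0 powR0 // !(mulr0, mul0r); apply: le_of_le_addr_div x0 _ => t /le_p.
  by rewrite ga_eq0 mul0r powR0.
have ga_gt0 : 0 < ga by rewrite lt_neqAle eq_sym ga_neq0.
have [x_eq0|x_neq0] := eqVneq x 0.
  rewrite x_eq0 powR0 ?mulr0; last by rewrite mulf_neq0 ?invr_eq0 ?gt_eqF ?addr_gt0.
  by apply: le0_of_le_powR ga_gt0 al_gt0 _ => t /le_p; rewrite x_eq0 mul0r addr0.
have x_gt0 : 0 < x by rewrite lt_neqAle eq_sym x_neq0.
have [t t0 <-] := exists_powR_tradeoff (powR_gt0 al ga_gt0) x_gt0 al_gt0.
by have := le_p _ t0; rewrite powRM // (ltW t0).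
Qed.

End tradeoff.

Section measurable_cV.
Context {dT : measure_display} (T : measurableType dT) (R : realType) (n : nat).
Implicit Types (F G : T -> 'cV[R]_n) (f g : T -> R).

Definition measurable_cV F := forall i, measurable_fun setT (fun w => F w i 0).

Lemma measurable_cV_cst (v : 'cV[R]_n) : measurable_cV (fun=> v).
Proof. by move=> i; exact: measurable_cst. Qed.

Lemma measurable_cV_sub F G : measurable_cV F -> measurable_cV G ->
  measurable_cV (fun w => F w - G w).
Proof. by move=> mF mG i; under eq_fun do rewrite !mxE; exact: measurable_funB. Qed.

Lemma measurable_dotv F G : measurable_cV F -> measurable_cV G ->
  measurable_fun setT (fun w => dotv (F w) (G w)).
Proof. by move=> mF mG; apply: measurable_sum => i; exact: measurable_funM. Qed.

Lemma measurable_ler f g : measurable_fun setT f -> measurable_fun setT g ->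
  measurable [set w | f w <= g w].
Proof. by move=> mf mg; rewrite -[X in measurable X]setTI; exact: measurable_fun_le. Qed.

Lemma measurable_cV_eq F G : measurable_cV F -> measurable_cV G ->
  measurable [set w | F w = G w].
Proof.
move=> mF mG; have -> : [set w | F w = G w] = \bigcap_(i in [set: 'I_n])
    ([set w | F w i 0 <= G w i 0] `&` [set w | G w i 0 <= F w i 0]).
  apply/seteqP; split => [w /= eq_w i _|w /= eq_w]; first by split => /=; rewrite eq_w.
  apply/matrixP => i j; rewrite ord1; have [le1 le2] := eq_w i I.
  by apply/eqP; rewrite eq_le le1 le2.
apply: fin_bigcap_measurable finite_finset _ => i _.
by apply: measurableI; apply: measurable_ler.
Qed.

End measurable_cV.

Section expectation.
Context {dT : measure_display} (T : measurableType dT) (R : realType).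
Variable P : probability T R.
Local Open Scope ereal_scope.

Lemma expectation_scaled_indic (k : R) (S : set T) : (0 <= k)%R -> measurable S ->
  'E_P[fun w => (k * \1_S w)%R] = k%:E * P S.
Proof.
move=> k0 mS; rewrite unlock; under eq_integral do rewrite EFinM.
rewrite ge0_integralZl_EFin //= ?integral_indic ?setIT //.
by apply/measurable_EFinP; exact: measurable_indic.
Qed.

Lemma probability_fineK (S : set T) : measurable S -> (fine (P S))%:E = P S.
Proof. by move=> mS; rewrite fineK // fin_num_measure. Qed.

End expectation.

Section excess_cost.
Context {dT : measure_display} (T : measurableType dT) (R : realType).
Variables (P : probability T R) (d m : nat) (A : 'M[R]_(m, d)) (b : 'cV[R]_m) (B : R).
Variables (c pst pol : T -> 'cV[R]_d).
Local Notation Z := (polytope A b).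
Local Notation V := (extreme_points (polytope A b)).
Hypothesis c_le1 : forall w, enorm (c w) <= 1.
Hypothesis B_gt0 : 0 < B.
Hypothesis Z_bounded : forall z, Z z -> enorm z <= B.
Hypothesis V_finite : finite_set V.
Hypotheses (mc : measurable_cV c) (mpst : measurable_cV pst) (mpol : measurable_cV pol).
Hypothesis pst_opt : forall w, V (pst w) /\ argminZ Z (c w) (pst w).
Hypothesis pol_ext : forall w, V (pol w).

Let excess w := dotv (c w) (pol w - pst w).
Let disagree := [set w | pst w <> pol w].
Let nonunique := [set w | exists z1 z2,
  argminZ Z (c w) z1 /\ argminZ Z (c w) z2 /\ z1 <> z2].
Let small_gap delta := [set w | 0 < gap Z (c w) <= delta].
Let large_excess delta := [set w | delta <= excess w].

Lemma excess_ge0 w : 0 <= excess w.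
Proof.
rewrite /excess dotvBr subr_ge0; have [_ [_ pst_min]] := pst_opt w.
exact/pst_min/(pol_ext w).1.
Qed.

Lemma excess_le_indic w : excess w <= 2 * B * \1_disagree w.
Proof.
rewrite indicE /excess dotvBr; have [dis|/contrapT eq_w] := pselect (disagree w).
  rewrite mem_set // mulr1 -[X in _ - X]opprK -dotvNr.
  have pst_B : enorm (- pst w) <= B by rewrite enormN; exact: Z_bounded (pst_opt w).1.1.
  have := dotv_le_enorm B_gt0 (c_le1 w) (Z_bounded (pol_ext w).1).
  have := dotv_le_enorm B_gt0 (c_le1 w) pst_B.
  lra.
by rewrite eq_w subrr memNset ?mulr0 // => /(_ eq_w).
Qed.

Lemma measurable_excess : measurable_fun setT excess.
Proof. exact: measurable_dotv mc (measurable_cV_sub mpol mpst). Qed.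

Lemma measurable_argmin v : V v -> measurable [set w | argminZ Z (c w) v].
Proof.
move=> Vv; have -> : [set w | argminZ Z (c w) v] =
    \bigcap_(v' in V) [set w | dotv (c w) v <= dotv (c w) v'].
  by apply/seteqP; split => w /(argmin_extremeE Z_bounded _ Vv).
apply: fin_bigcap_measurable V_finite _ => v' _.
by apply: measurable_ler; apply: measurable_dotv mc (measurable_cV_cst _).
Qed.

Lemma measurable_disagree : measurable disagree.
Proof. exact/measurableC/measurable_cV_eq. Qed.

Lemma measurable_nonunique : measurable nonunique.
Proof.
have -> : nonunique = \bigcup_(v1 in V) \bigcup_(v2 in V `\ v1)
    ([set w | argminZ Z (c w) v1] `&` [set w | argminZ Z (c w) v2]).
  apply/seteqP; split => w /=.
    move=> [z1 [z2 [z1_min [z2_min z12]]]].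
    have [v1 [v2 [Vv1 Vv2 v1_min v2_min v12]]] :=
      argmin_extreme_points_neq Z_bounded z1_min z2_min z12.
    by exists v1 => //; exists v2 => //; split => // /esym.
  move=> [v1 Vv1 [v2 [Vv2 v21] [v1_min v2_min]]].
  by exists v1, v2; split => //; split => // /esym.
apply: fin_bigcup_measurable V_finite _ => v1 Vv1.
apply: fin_bigcup_measurable (finite_setD _ V_finite) _ => v2 [Vv2 _].
by apply: measurableI; apply: measurable_argmin.
Qed.

Lemma measurable_small_gap delta : measurable (small_gap delta).
Proof.
have -> : small_gap delta = \bigcup_(v0 in V) \bigcup_(v1 in V)
    ([set w | argminZ Z (c w) v0] `&` ~` [set w | argminZ Z (c w) v1] `&`
     [set w | dotv (c w) v1 - dotv (c w) v0 <= delta]).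
  apply/seteqP; split => w /=.
    move=> /andP[gap_gt0 gap_le].
    have [v0 [v1 [Vv0 v0_min Vv1 v1_nmin gap_E]]] :=
      gap_gt0_vertices Z_bounded V_finite gap_gt0.
    by exists v0 => //; exists v1 => //; rewrite /= -gap_E.
  move=> [v0 Vv0 [v1 Vv1 [[v0_min v1_nmin] le_delta]]].
  have /andP[gap_gt0 gap_le] := gap_gt0_le V_finite Vv1 v1_nmin v0_min.
  by rewrite /small_gap /= gap_gt0 (le_trans gap_le le_delta).
apply: fin_bigcup_measurable V_finite _ => v0 Vv0.
apply: fin_bigcup_measurable V_finite _ => v1 Vv1.
apply: measurableI.
  by apply: measurableI; [exact: measurable_argmin | exact/measurableC/measurable_argmin].
apply: measurable_ler; last exact: measurable_cst.
by apply: measurable_funB; apply: measurable_dotv mc (measurable_cV_cst _).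
Qed.

Lemma disagree_subset delta :
  disagree `<=` nonunique `|` small_gap delta `|` large_excess delta.
Proof.
move=> w dis; have [nu|nu] := pselect (nonunique w); first by left; left.
have [Vpst pst_min] := pst_opt w.
have pol_nmin : ~ argminZ Z (c w) (pol w).
  by move=> pol_min; apply: nu; exists (pst w), (pol w).
have /andP[gap_gt0 gap_le] := gap_gt0_le V_finite (pol_ext w) pol_nmin pst_min.
have [gap_le_delta|delta_lt] := lerP (gap Z (c w)) delta.
  by left; right; rewrite /small_gap /= gap_gt0 gap_le_delta.
by right; rewrite /large_excess /= /excess dotvBr; apply/ltW/(lt_le_trans delta_lt gap_le).
Qed.

Local Open Scope ereal_scope.

Lemma expectation_excess_le : 'E_P[excess] <= (2 * B)%:E * P disagree.
Proof.
have B2_ge0 : (0 <= 2 * B)%R by rewrite mulr_ge0 // ltW.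
rewrite -(expectation_scaled_indic P B2_ge0 measurable_disagree).
apply: expectation_le; [exact: measurable_excess | | exact: excess_ge0 | | ].
- by apply: measurable_funM; [exact: measurable_cst | exact/measurable_indic/measurable_disagree].
- by move=> w; rewrite mulr_ge0 ?indic_ge0.
- exact/aeW/excess_le_indic.
Qed.

Lemma measurable_large_excess delta : measurable (large_excess delta).
Proof. exact: measurable_ler (measurable_cst _) measurable_excess. Qed.

Lemma markov_excess delta : (0 < delta)%R ->
  delta%:E * P (large_excess delta) <= 'E_P[excess].
Proof.
move=> delta_gt0; have mL := measurable_large_excess delta.
rewrite -(expectation_scaled_indic P (ltW delta_gt0) mL).
apply: expectation_le; [| exact: measurable_excess | | exact: excess_ge0 | ].
- by apply: measurable_funM; [exact: measurable_cst | exact/measurable_indic].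
- by move=> w; rewrite mulr_ge0 ?indic_ge0 // ltW.
- apply: aeW => w; rewrite indicE; case: (boolP (w \in large_excess delta)).
    by rewrite inE mulr1.
  by rewrite mulr0 => _; apply: excess_ge0.
Qed.

Lemma disagree_le_union delta :
  P disagree <= P nonunique + P (small_gap delta) + P (large_excess delta).
Proof.
have mU := measurable_nonunique; have mG := measurable_small_gap delta.
apply: le_trans (le_measure _ _ _ (disagree_subset delta)) _; rewrite ?inE.
- exact: measurable_disagree.
- by apply: measurableU; [exact: measurableU | exact: measurable_large_excess].
apply: le_trans (measureU2 _ _ _) _.
- exact: measurableU.
- exact: measurable_large_excess.
by rewrite leeD2r // measureU2.
Qed.

Lemma expectation_excess_fineK : (fine 'E_P[excess])%:E = 'E_P[excess].
Proof.
rewrite fineK // ge0_fin_numE; last exact: expectation_ge0 excess_ge0.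
apply: le_lt_trans expectation_excess_le _.
by rewrite -(probability_fineK P measurable_disagree) -EFinM ltry.
Qed.

Local Close Scope ereal_scope.

Lemma excess_cost_le_disagreement : fine 'E_P[excess] <= 2 * B * fine (P disagree).
Proof.
rewrite -lee_fin EFinM probability_fineK ?expectation_excess_fineK //.
  exact: expectation_excess_le.
exact: measurable_disagree.
Qed.

Lemma disagreement_le_tradeoff alpha gamma delta :
    (forall delta, 0 < delta ->
       (P (small_gap delta) <= (powR (gamma * delta / B) alpha)%:E)%E) ->
    P nonunique = 0%E -> 0 < delta ->
  fine (P disagree) <= powR (gamma * delta / B) alpha + fine 'E_P[excess] / delta.
Proof.
move=> noise nonunique0 delta_gt0.
have mL := measurable_large_excess delta.
have pL_le : fine (P (large_excess delta)) <= fine 'E_P[excess] / delta.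
  rewrite ler_pdivlMr // mulrC -lee_fin EFinM probability_fineK //.
  by rewrite expectation_excess_fineK markov_excess.
suff : fine (P disagree) <= powR (gamma * delta / B) alpha + fine (P (large_excess delta)).
  lra.
rewrite -lee_fin EFinD !probability_fineK //; last exact: measurable_disagree.
apply: le_trans (disagree_le_union delta) _.
by rewrite nonunique0 add0e leeD2r // noise.
Qed.

End excess_cost.

Theorem lemma1 (R : realType) (dT : measure_display) (T : measurableType dT)
  (P : probability T R) (p d m : nat)
  (X : T -> 'cV[R]_p) (fstar : 'cV[R]_p -> 'cV[R]_d)
  (A : 'M[R]_(m, d)) (b : 'cV[R]_m) (B : R)
  (pistar pi : 'cV[R]_p -> 'cV[R]_d) (alpha gamma : R) :
  (* standing assumptions *)
  (forall x, enorm (fstar x) <= 1) ->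
  0 < B ->
  (forall z, polytope A b z -> enorm z <= B) ->
  finite_set (extreme_points (polytope A b)) ->
  (forall i, measurable_fun setT (fun w => fstar (X w) i 0)) ->
  (forall i, measurable_fun setT (fun w => pistar (X w) i 0)) ->
  (forall i, measurable_fun setT (fun w => pi (X w) i 0)) ->
  (forall x, extreme_points (polytope A b) (pistar x) /\
             argminZ (polytope A b) (fstar x) (pistar x)) ->
  (forall x, extreme_points (polytope A b) (pi x)) ->
  (* hypotheses of the lemma *)
  0 <= alpha -> 0 <= gamma ->
  (forall delta : R, 0 < delta ->
     (P [set w | (0 < gap (polytope A b) (fstar (X w)) <= delta)%R]
      <= (powR (gamma * delta / B) alpha)%:E)%E) ->
  P [set w | exists z1 z2, argminZ (polytope A b) (fstar (X w)) z1 /\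
                           argminZ (polytope A b) (fstar (X w)) z2 /\ z1 <> z2]
    = 0%E ->
  let dist := fine ('E_P[fun w => dotv (fstar (X w)) (pi (X w) - pistar (X w))%R])%E / B in
  let dDelta := fine (P [set w | pistar (X w) <> pi (X w)]) in
  let c1 := powR (alpha * powR gamma alpha) (- (alpha / (alpha + 1)))
            * (alpha + 1) * powR gamma alpha in
  dist <= 2 * dDelta /\ dDelta <= c1 * powR dist (alpha / (alpha + 1)).
Proof.
move=> fstar_le1 B_gt0 Z_bounded V_finite mf mpst mpi pst_opt pi_ext alpha_ge0
  gamma_ge0 noise nonunique0 dist dDelta c1.
have c_le1 w : enorm (fstar (X w)) <= 1 := fstar_le1 (X w).
have pst_opt_X w := pst_opt (X w); have pi_ext_X w := pi_ext (X w).
have e_le := excess_cost_le_disagreement P c_le1 B_gt0 Z_bounded mf mpst mpi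
  pst_opt_X pi_ext_X.
have e_ge0 : 0 <= fine ('E_P[fun w => dotv (fstar (X w)) (pi (X w) - pistar (X w))])%E.
  exact/fine_ge0/expectation_ge0/(excess_ge0 pst_opt_X pi_ext_X).
split; first by rewrite ler_pdivrMr // mulrAC.
apply: le_powR_tradeoff => // [|t t_gt0]; first by rewrite divr_ge0 // ltW.
have := disagreement_le_tradeoff c_le1 B_gt0 Z_bounded V_finite mf mpst mpi
  pst_opt_X pi_ext_X noise nonunique0 (mulr_gt0 t_gt0 B_gt0).
by rewrite [gamma * (t * B)]mulrA mulfK ?gt_eqF // (mulrC t B) invfM mulrA.
Qed.
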